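(* Every topological space $X$ is $\Gamma$-embedded in $\mathcal{K}(X)$, the hyperspace of all nonempty compact subsets of $X$ with the Vietoris topology; namely via the embedding $c\colon X\to\mathcal K(X)$, $x\mapsto\{x\}$, and the semigroup homomorphism $\sigma\colon\Gamma(X)\to\Gamma(\mathcal K(X))$ given by $\sigma(1_\emptyset)=1_\emptyset$ and, for $f$ with nonempty domain, $\sigma(f)\colon \mathrm{dom}(f)^+\to\mathrm{im}(f)^+$, $A\mapsto f(A)$.
   Context: The Vietoris topology on $\mathcal K(X)$ has subbasis the sets $V^-=\{A\in\mathcal K(X): A\cap V\ne\emptyset\}$ and $V^+=\{A\in\mathcal K(X): A\subset V\}$ for $V\subset X$ nonempty open. For a topological space $X$, $\Gamma(X)$ is the inverse monoid of homeomorphisms between open subsets of $X$ (including the empty map $1_\emptyset$), with product $\psi\circ\phi\colon \phi^{-1}(\mathrm{dom}(\psi)\cap\mathrm{im}(\phi))\to\psi(\mathrm{dom}(\psi)\cap\mathrm{im}(\phi))$. Let $\Gamma(X)*X=\{(f,x)\in\Gamma(X)\times X: x\in\mathrm{dom}(f)\}$. $X$ is $\Gamma$-embedded in a space $Z$ if there exist a semigroup homomorphism $\sigma\colon\Gamma(X)\to\Gamma(Z)$ and a topological embedding $c\colon X\to Z$ such that for every $(f,x)\in\Gamma(X)*X$ one has $c(x)\in\mathrm{dom}(\sigma(f))$ and $\sigma(f)(c(x))=c(f(x))$. *)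

From HB Require Import structures.
From mathcomp Require Import all_boot all_classical.
From mathcomp Require Import topology.
From Stdlib Require List.

Set Implicit Arguments.
Unset Strict Implicit.
Unset Printing Implicit Defensive.

Local Open Scope classical_set_scope.

(* A topology on a type T is given here by its predicate of open sets
   [op : set T -> Prop]; for a topologicalType we use [open]. *)

(* Partial maps T -> T (maps between subsets): f x = None means x is not in
   dom(f).  Leibniz equality of such maps is equality of partial maps. *)
Definition pdom (T : Type) (f : T -> option T) : set T :=
  [set x | f x <> None].
Definition pimg (T : Type) (f : T -> option T) : set T :=
  [set y | exists x, f x = Some y].

Definition pcomp (T : Type) (psi phi : T -> option T) : T -> option T :=
  fun x => match phi x with Some y => psi y | None => None end.

Definition partial_homeo (T : Type) (op : set T -> Prop) (f : T -> option T)
  : Prop :=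
  [/\ op (pdom f),
      op (pimg f),
      (forall x1 x2 y, f x1 = Some y -> f x2 = Some y -> x1 = x2),
      (* continuity of f : dom f -> im f (subspace topologies of open sets) *)
      (forall V, op V -> op [set x | exists y, f x = Some y /\ V y]) &
      (* continuity of the inverse, i.e. f is open on dom f *)
      (forall U, op U -> op [set y | exists x, f x = Some y /\ U x])].

Definition Gamma (T : Type) (op : set T -> Prop) : set (T -> option T) :=
  [set f | partial_homeo op f].

Definition top_embedding (X Z : Type) (opX : set X -> Prop)
  (opZ : set Z -> Prop) (c : X -> Z) : Prop :=
  [/\ injective c,
      (forall V, opZ V -> opX (c @^-1` V)) &
      (forall U, opX U -> exists V, opZ V /\ c @^-1` V = U)].

Definition gamma_embedded_via (X Z : Type) (opX : set X -> Prop)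
  (opZ : set Z -> Prop) (sigma : (X -> option X) -> (Z -> option Z))
  (c : X -> Z) : Prop :=
  [/\
      (forall f, Gamma opX f -> Gamma opZ (sigma f)),
      (forall f g, Gamma opX f -> Gamma opX g ->
         sigma (pcomp g f) = pcomp (sigma g) (sigma f)),
      top_embedding opX opZ c &
      (forall f x y, Gamma opX f -> f x = Some y ->
         sigma f (c x) = Some (c y))].

Definition gamma_embedded (X Z : Type) (opX : set X -> Prop)
  (opZ : set Z -> Prop) : Prop :=
  exists sigma c, gamma_embedded_via opX opZ sigma c.

Definition hyperspace (X : topologicalType) : Type :=
  {A : set X | compact A /\ A !=set0}.

Definition vietoris_minus (X : topologicalType) (V : set X)
  : set (hyperspace X) :=
  [set A | exists2 x, proj1_sig A x & V x].
Definition vietoris_plus (X : topologicalType) (V : set X)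
  : set (hyperspace X) :=
  [set A | proj1_sig A `<=` V].

Definition vietoris_subbasic (X : topologicalType) (W : set (hyperspace X))
  : Prop :=
  exists V : set X, [/\ open V, V !=set0 &
    (W = vietoris_minus V \/ W = vietoris_plus V)].

(* Open sets of the topology generated by this subbasis: unions of finite
   intersections of subbasic sets. *)
Definition vietoris_open (X : topologicalType) (U : set (hyperspace X))
  : Prop :=
  forall A, U A -> exists s : seq (set (hyperspace X)),
    [/\ (forall W, List.In W s -> vietoris_subbasic W),
        (forall W, List.In W s -> W A) &
        (forall B, (forall W, List.In W s -> W B) -> U B)].

Definition singleton_map (X : topologicalType) (x : X) : hyperspace X :=
  exist _ [set x] (conj (@compact_set1 X x) (ex_intro _ x (erefl : [set x] x))).

(* For f in Gamma(X) the image
   of a nonempty compact A contained in dom f is nonempty compact, so the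
   guard below is then equivalent to A `<=` dom f; for f = 1_emptyset the
   result is the empty map. *)
Definition pimage (X : Type) (f : X -> option X) (A : set X) : set X :=
  [set y | exists2 x, A x & f x = Some y].

Definition sigmaK (X : topologicalType) (f : X -> option X)
  (A : hyperspace X) : option (hyperspace X) :=
  match pselect ((proj1_sig A `<=` pdom f) /\
                 (compact (pimage f (proj1_sig A)) /\
                  pimage f (proj1_sig A) !=set0)) with
  | left H => Some (exist _ (pimage f (proj1_sig A)) (proj2 H))
  | right _ => None
  end.

From mathcomp Require Import all_boot all_classical.
From mathcomp Require Import topology.
From Stdlib Require List.

Set Implicit Arguments.
Unset Strict Implicit.
Unset Printing Implicit Defensive.

Local Open Scope classical_set_scope.

(* For f in Gamma(X), the map A |-> f(A) is a bijection from dom(f)^+ onto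
   im(f)^+ whose inverse is the same construction for f^-1; images of compact
   sets stay compact because f is continuous on its open domain.  Continuity
   reduces to the subbasis: the preimage of V^- is (f^-1 V)^- /\ dom(f)^+ and
   the preimage of V^+ is (f^-1 V)^+, both open; applied to f^-1 this gives
   openness.  Finally x |-> {x} is an
   embedding because the preimages of V^- and V^+ are both V. *)

Section PartialMaps.
Variable T : Type.
Implicit Types (f g : T -> option T) (A U V : set T).

Definition ppreimage f V : set T := [set x | exists y, f x = Some y /\ V y].

Definition pcontinuous (op : set T -> Prop) f :=
  forall V, op V -> op (ppreimage f V).

Definition is_pinv f g := forall x y, f x = Some y <-> g y = Some x.

Definition pinv f : T -> option T := fun y =>
  if pselect (exists x, f x = Some y) is left H then Some (projT1 (cid H))
  else None.

Lemma pinvP f : (forall x1 x2 y, f x1 = Some y -> f x2 = Some y -> x1 = x2) ->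
  is_pinv f (pinv f).
Proof.
move=> f_inj x y; rewrite /pinv; case: pselect => [H|H]; split.
- by move=> fx; case: (cid H) => x' /= fx'; rewrite (f_inj _ _ _ fx' fx).
- by case=> <-; exact: (projT2 (cid H)).
- by move=> fx; exfalso; apply: H; exists x.
- by [].
Qed.

Lemma is_pinv_sym f g : is_pinv f g -> is_pinv g f.
Proof. by move=> fg x y; split => /fg. Qed.

Lemma pimg_pinv f g : is_pinv f g -> pimg f = pdom g.
Proof.
move=> fg; apply/seteqP; split => y.
  by case=> x /fg gy; rewrite /pdom /= gy.
by rewrite /pdom /=; case gy: (g y) => [x|] // _; exists x; apply/fg.
Qed.

Lemma ppreimage_pinv f g U : is_pinv f g ->
  ppreimage g U = [set y | exists x, f x = Some y /\ U x].
Proof.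
by move=> fg; apply/seteqP; split => y [x [/fg xy Ux]]; exists x.
Qed.

Lemma partial_homeo_of_pinv op f g : is_pinv f g ->
  op (pdom f) -> op (pdom g) -> pcontinuous op f -> pcontinuous op g ->
  partial_homeo op f.
Proof.
move=> fg df dg cf cg; split => //.
- by rewrite (pimg_pinv fg).
- by move=> x1 x2 y /fg gy /fg; rewrite gy => -[].
- by move=> U /cg; rewrite (ppreimage_pinv _ fg).
Qed.

Lemma partial_homeo_pinv op f g : partial_homeo op f -> is_pinv f g ->
  partial_homeo op g.
Proof.
case=> df imf _ cf opf fg.
apply: partial_homeo_of_pinv (is_pinv_sym fg) _ df _ cf.
- by rewrite -(pimg_pinv fg).
- by move=> U /opf; rewrite -(ppreimage_pinv _ fg).
Qed.

Lemma ppreimage_sub_pdom f V : ppreimage f V `<=` pdom f.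
Proof. by move=> x [y [fx _]]; rewrite /pdom /= fx. Qed.

Lemma ppreimageT f : ppreimage f setT = pdom f.
Proof.
apply/seteqP; split => x; first exact: ppreimage_sub_pdom.
by rewrite /ppreimage /pdom /=; case: (f x) => [y|] // _; exists y.
Qed.

Lemma ppreimageI f U V : ppreimage f (U `&` V) = ppreimage f U `&` ppreimage f V.
Proof.
apply/seteqP; split => x; first by case=> y [fx [Uy Vy]]; split; exists y.
by case=> -[y [fx Uy]] [y' []]; rewrite fx => -[<-] Vy; exists y.
Qed.

Lemma pimage_pcomp f g A : pimage (pcomp g f) A = pimage g (pimage f A).
Proof.
apply/seteqP; split => z.
  case=> x Ax; rewrite /pcomp; case fx: (f x) => [y|] // gy.
  by exists y => //; exists x.
by case=> y [x Ax fx] gy; exists x => //; rewrite /pcomp fx.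
Qed.

Lemma sub_pdom_pcomp f g A :
  A `<=` pdom (pcomp g f) <-> A `<=` pdom f /\ pimage f A `<=` pdom g.
Proof.
rewrite /pdom /pcomp; split.
  move=> sA; split => [x /sA /=|y [x /sA /= + fx]].
    by case: (f x) => [y _|/(_ erefl)].
  by rewrite fx.
case=> sf sg x /[dup] Ax /sf /=; case fx: (f x) => [y|] //= _.
by apply: sg; exists x.
Qed.

Lemma pimage_pinv f g A : is_pinv f g -> A `<=` pdom f ->
  pimage g (pimage f A) = A.
Proof.
move=> fg sA; apply/seteqP; split => x.
  by case=> y [x' Ax' /fg gy]; rewrite gy => -[<-].
move=> Ax; move: (sA x Ax); rewrite /pdom /=; case fx: (f x) => [y|] // _.
by exists y; [exists x | apply/fg].
Qed.

Lemma pimage_sub_pdom f g A : is_pinv f g -> pimage f A `<=` pdom g.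
Proof. by move=> fg y [x _ /fg gy]; rewrite /pdom /= gy. Qed.

End PartialMaps.

Lemma compact_pimage (X : topologicalType) (f : X -> option X) (A : set X) :
  open (pdom f) -> pcontinuous open f -> compact A -> A `<=` pdom f ->
  compact (pimage f A).
Proof.
move=> df cf cA sA.
(* Any total extension of [f] will do: only its values on [pdom f] matter. *)
pose g x := odflt x (f x).
have -> : pimage f A = g @` A.
  apply/seteqP; split => y.
    by case=> x Ax fx; exists x => //; rewrite /g fx.
  case=> x Ax <-; move: (sA x Ax); rewrite /pdom /g /=.
  by case fx: (f x) => [z|] // _; exists x.
apply: continuous_compact cA; apply: continuous_subspaceW sA _.
apply/continuous_in_subspaceT/continuous_inP => // V oV.
have -> : pdom f `&` g @^-1` V = ppreimage f V.
  apply/seteqP; split => x; last by case=> y [fx Vy]; rewrite /pdom /g /= fx.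
  rewrite /pdom /g /ppreimage /=; case=> + Vfx.
  by case fx: (f x) Vfx => [y|] // Vy _; exists y.
exact: cf.
Qed.

Section Hyperspace.
Variable X : topologicalType.
Notation K := (hyperspace X).
Implicit Types (f g : X -> option X) (A B : K).

Lemma sigmaK_Some f A B : sigmaK f A = Some B <->
  proj1_sig A `<=` pdom f /\ proj1_sig B = pimage f (proj1_sig A).
Proof.
rewrite /sigmaK; case: pselect => [H|H]; split.
- by case=> <-; split => //; exact: H.1.
- by case: B => b pb [_ /= Eb]; subst b; congr Some; exact: eq_exist.
- by [].
- case=> sA Eb; exfalso; apply: H; split => //.
  by rewrite -Eb; exact: proj2_sig B.
Qed.

Lemma sigmaK_None f A : ~ proj1_sig A `<=` pdom f -> sigmaK f A = None.
Proof. by move=> nsA; case fA: (sigmaK f A) => [B|] //; case/sigmaK_Some: fA. Qed.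

Lemma sigmaK_defined f A : Gamma open f -> proj1_sig A `<=` pdom f ->
  exists B, sigmaK f A = Some B.
Proof.
case=> df _ _ cf _ sA; have [cA [a Aa]] := proj2_sig A.
have cfA := compact_pimage df cf cA sA.
have : pimage f (proj1_sig A) !=set0.
  by move: (sA a Aa); rewrite /pdom /=; case fa: (f a) => [y|] // _; exists y, a.
move=> nfA; exists (exist _ (pimage f (proj1_sig A)) (conj cfA nfA)).
exact/sigmaK_Some.
Qed.

Lemma pdom_sigmaK f : Gamma open f -> pdom (sigmaK f) = vietoris_plus (pdom f).
Proof.
move=> Gf; apply/seteqP; split => A.
  by rewrite /pdom /=; case fA: (sigmaK f A) => [B|] // _; case/sigmaK_Some: fA.
by move=> /(sigmaK_defined Gf) [B fA]; rewrite /pdom /= fA.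
Qed.

Lemma is_pinv_sigmaK f g : is_pinv f g -> is_pinv (sigmaK f) (sigmaK g).
Proof.
have swap f' g' A B :
    is_pinv f' g' -> sigmaK f' A = Some B -> sigmaK g' B = Some A.
  move=> fg /sigmaK_Some [sA EB]; apply/sigmaK_Some; rewrite EB.
  by split; [exact: pimage_sub_pdom fg | rewrite pimage_pinv].
by move=> fg A B; split; apply: swap => //; exact: is_pinv_sym.
Qed.

Lemma sigmaK_pcomp f g : Gamma open f -> Gamma open g ->
  sigmaK (pcomp g f) = pcomp (sigmaK g) (sigmaK f).
Proof.
move=> Gf Gg; apply/funext => A; rewrite {2}/pcomp.
have [/sub_pdom_pcomp [sf sg] | ngf] :=
  pselect (proj1_sig A `<=` pdom (pcomp g f)).
  have [B /[dup] fA /sigmaK_Some [_ EB]] := sigmaK_defined Gf sf.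
  have [C /[dup] gB /sigmaK_Some [_ EC]] : exists C, sigmaK g B = Some C.
    by apply: sigmaK_defined Gg _; rewrite EB.
  rewrite fA /= gB; apply/sigmaK_Some; rewrite EC EB pimage_pcomp.
  by split => //; apply/sub_pdom_pcomp.
rewrite (sigmaK_None ngf); case fA: (sigmaK f A) => [B|] //=.
case gB: (sigmaK g B) => [C|] //; exfalso; apply: ngf.
move: fA gB => /sigmaK_Some [sf EB] /sigmaK_Some [sg _].
by apply/sub_pdom_pcomp; rewrite -EB.
Qed.

Definition vietoris_meet (s : seq (set K)) : set K :=
  [set A | forall W, List.In W s -> W A].

Lemma vietoris_meet_nil : vietoris_meet [::] = setT.
Proof. by apply/seteqP; split => // A _ W []. Qed.

Lemma vietoris_meet_cons W s :
  vietoris_meet (W :: s) = W `&` vietoris_meet s.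
Proof.
apply/seteqP; split => A.
  by move=> sA; split => [|W' W's]; apply: sA; [left|right].
by case=> WA sA W' [<-|/sA].
Qed.

Lemma vietoris_open_nbhs (U : set K) :
  (forall A, U A -> exists2 W, vietoris_open W & W A /\ W `<=` U) ->
  vietoris_open U.
Proof.
move=> hU A /hU [W oW [WA sWU]]; have [s [s_sub sA sW]] := oW A WA.
by exists s; split => // B /sW /sWU.
Qed.

Lemma vietoris_openI (U V : set K) :
  vietoris_open U -> vietoris_open V -> vietoris_open (U `&` V).
Proof.
move=> oU oV A [UA VA]; have [s [s_sub sA sU]] := oU A UA.
have [t [t_sub tA tV]] := oV A VA.
exists (s ++ t); split.
- by move=> W; rewrite List.in_app_iff => -[/s_sub|/t_sub].
- by move=> W; rewrite List.in_app_iff => -[/sA|/tA].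
- move=> B stB; split; [apply: sU | apply: tV] => W Wst; apply: stB;
    rewrite List.in_app_iff; by [left | right].
Qed.

Lemma vietoris_open_subbasic (W : set K) :
  (W !=set0 -> vietoris_subbasic W) -> vietoris_open W.
Proof.
move=> sW A WA; exists [:: W]; split => [W' [<-|[]]|W' [<-|[]] //|B].
  by apply: sW; exists A.
by apply; left.
Qed.

Lemma vietoris_open_plus (V : set X) :
  open V -> vietoris_open (vietoris_plus V).
Proof.
move=> oV; apply: vietoris_open_subbasic => -[A sA].
exists V; split => //; last by right.
by have [a Aa] := proj2 (proj2_sig A); exists a; exact: sA.
Qed.

Lemma vietoris_open_minus (V : set X) :
  open V -> vietoris_open (vietoris_minus V).
Proof.
move=> oV; apply: vietoris_open_subbasic => -[A [a Aa Va]].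
by exists V; split => //; [exists a | left].
Qed.

Lemma vietoris_pcontinuous (phi : K -> option K) :
  vietoris_open (pdom phi) ->
  (forall W, vietoris_subbasic W -> vietoris_open (ppreimage phi W)) ->
  pcontinuous (@vietoris_open X) phi.
Proof.
move=> dphi cphi U oU; apply: vietoris_open_nbhs => A [B [phiA UB]].
have [s [s_sub sB sU]] := oU B UB.
exists (ppreimage phi (vietoris_meet s)); last first.
  split; first by exists B.
  by move=> A' [B' [phiA' sB']]; exists B'; split => //; exact: sU.
elim: s s_sub {sB sU} => [|W s IH] s_sub.
  by rewrite vietoris_meet_nil ppreimageT.
rewrite vietoris_meet_cons ppreimageI; apply: vietoris_openI.
  by apply: cphi; apply: s_sub; left.
by apply: IH => W' W's; apply: s_sub; right.
Qed.

Lemma ppreimage_sigmaK_minus f (V : set X) : Gamma open f ->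
  ppreimage (sigmaK f) (vietoris_minus V) =
  vietoris_minus (ppreimage f V) `&` vietoris_plus (pdom f).
Proof.
move=> Gf; apply/seteqP; split => A.
  case=> B [/sigmaK_Some [sA EB] [y]]; rewrite EB => -[x Ax fx] Vy.
  by split => //; exists x => //; exists y.
case=> -[x Ax [y [fx Vy]]] /(sigmaK_defined Gf) [B /[dup] fA /sigmaK_Some [_ EB]].
by exists B; split => //; exists y => //; rewrite EB; exists x.
Qed.

Lemma ppreimage_sigmaK_plus f (V : set X) : Gamma open f ->
  ppreimage (sigmaK f) (vietoris_plus V) = vietoris_plus (ppreimage f V).
Proof.
move=> Gf; apply/seteqP; split => A.
  case=> B [/sigmaK_Some [sA EB] BV] x Ax; move: (sA x Ax); rewrite /pdom /=.
  case fx: (f x) => [y|] // _; exists y; split => //.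
  by apply: BV; rewrite EB; exists x.
move=> AV; have sA : proj1_sig A `<=` pdom f.
  by move=> x /AV; exact: ppreimage_sub_pdom.
have [B /[dup] fA /sigmaK_Some [_ EB]] := sigmaK_defined Gf sA.
exists B; split => // y; rewrite EB => -[x /AV [y' [fx' Vy']] fx].
by move: fx'; rewrite fx => -[->].
Qed.

Lemma pcontinuous_sigmaK f :
  Gamma open f -> pcontinuous (@vietoris_open X) (sigmaK f).
Proof.
move=> Gf; have [df _ _ cf _] := Gf.
apply: vietoris_pcontinuous => [|W [V [oV _ [->|->]]]].
- by rewrite pdom_sigmaK //; exact: vietoris_open_plus.
- rewrite ppreimage_sigmaK_minus //.
  apply: vietoris_openI; last exact: vietoris_open_plus.
  by apply: vietoris_open_minus; exact: cf.
- by rewrite ppreimage_sigmaK_plus //; apply: vietoris_open_plus; exact: cf.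
Qed.

Lemma Gamma_sigmaK f : Gamma open f -> Gamma (@vietoris_open X) (sigmaK f).
Proof.
move=> Gf; have [df _ f_inj _ _] := Gf.
have fg := pinvP f_inj; have Gg := partial_homeo_pinv Gf fg.
have [dg _ _ _ _] := Gg.
apply: partial_homeo_of_pinv (is_pinv_sigmaK fg) _ _
  (pcontinuous_sigmaK Gf) (pcontinuous_sigmaK Gg).
all: by rewrite pdom_sigmaK //; exact: vietoris_open_plus.
Qed.

Lemma singleton_map_preimage_minus (V : set X) :
  @singleton_map X @^-1` vietoris_minus V = V.
Proof. by apply/seteqP; split => [x [y /= -> //]|x Vx]; exists x. Qed.

Lemma singleton_map_preimage_plus (V : set X) :
  @singleton_map X @^-1` vietoris_plus V = V.
Proof. by apply/seteqP; split => [x /(_ x erefl) //|x Vx y /= ->]. Qed.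

Lemma singleton_map_continuous (U : set K) :
  vietoris_open U -> open (@singleton_map X @^-1` U).
Proof.
rewrite openE => oU x Ux; have [s [s_sub sx sU]] := oU _ Ux.
have os : open (@singleton_map X @^-1` vietoris_meet s).
  elim: s s_sub {sx sU} => [|W s IH] s_sub.
    by rewrite vietoris_meet_nil preimage_setT; exact: openT.
  rewrite vietoris_meet_cons preimage_setI; apply: openI.
    have [V [oV _ [->|->]]] := s_sub W (or_introl erefl).
      by rewrite singleton_map_preimage_minus.
    by rewrite singleton_map_preimage_plus.
  by apply: IH => W' W's; apply: s_sub; right.
by apply: filterS (open_nbhs_nbhs (conj os sx)) => y; exact: sU.
Qed.

Lemma singleton_map_embedding :
  top_embedding open (@vietoris_open X) (@singleton_map X).
Proof.
split.
- move=> x y /(congr1 (@proj1_sig _ _)) /= exy.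
  by have : [set x] x by []; rewrite exy.
- exact: singleton_map_continuous.
- move=> U oU; exists (vietoris_plus U); split; first exact: vietoris_open_plus.
  exact: singleton_map_preimage_plus.
Qed.

Lemma sigmaK_singleton_map f x y : f x = Some y ->
  sigmaK f (singleton_map x) = Some (singleton_map y).
Proof.
move=> fx; apply/sigmaK_Some; split => [_ /= -> | /=].
  by rewrite /pdom /= fx.
apply/seteqP; split => [z /= ->|z [_ /= ->]]; first by exists x.
by rewrite fx => -[].
Qed.

End Hyperspace.

Theorem proposition2p6 (X : topologicalType) :
  gamma_embedded_via (@open X) (@vietoris_open X) (@sigmaK X) (@singleton_map X).
Proof.
split.
- exact: Gamma_sigmaK.
- exact: sigmaK_pcomp.
- exact: singleton_map_embedding.
- by move=> f x y _; exact: sigmaK_singleton_map.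
Qed.
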